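(* Let $r>0$ and let $\mu:[0,\infty)\to\mathbb R$ and $\sigma:[0,\infty)\to(0,\infty)$ be globally Lipschitz continuous. Let $\psi\in C^2[0,\infty)$ be the non-negative increasing solution of $\frac{\sigma^2(x)}{2}f''(x)+\mu(x)f'(x)=rf(x)$ with $\psi(0)=0$, $\psi'(0)=1$. Fix $b\ge0$. If $x\mapsto\mu(x)-rx$ is non-decreasing on $[0,b)$ and $\mu(0)\ge0$, then $\psi$ is concave on $[0,b)$. *)

From Stdlib Require Import Reals Lra.
From Coquelicot Require Import Coquelicot.
Open Scope R_scope.

Definition nonneg (x : R) : Prop := 0 <= x.

Definition lipschitz_nonneg (g : R -> R) : Prop :=
  exists L : R, forall x y, 0 <= x -> 0 <= y -> Rabs (g x - g y) <= L * Rabs (x - y).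

(* f' is the derivative of f on [0, oo), taken within [0, oo)
   (so one-sided at the endpoint 0). *)
Definition deriv_on_nonneg (f f' : R -> R) : Prop :=
  forall x, 0 <= x ->
    filterlim (fun y => (f y - f x) / (y - x))
      (within (fun y => 0 <= y /\ y <> x) (locally x)) (locally (f' x)).

Definition continuous_on_nonneg (g : R -> R) : Prop :=
  forall x, 0 <= x -> filterlim g (within nonneg (locally x)) (locally (g x)).

Definition C2_nonneg (f f1 f2 : R -> R) : Prop :=
  deriv_on_nonneg f f1 /\ deriv_on_nonneg f1 f2 /\ continuous_on_nonneg f2.

Definition concave_on_0b (f : R -> R) (b : R) : Prop :=
  forall x y t, 0 <= x < b -> 0 <= y < b -> 0 <= t <= 1 ->
    t * f x + (1 - t) * f y <= f (t * x + (1 - t) * y).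

From Pilot Require Import Defs.
From Stdlib Require Import Reals Lra.
From Coquelicot Require Import Coquelicot.
Open Scope R_scope.

(* By the ODE, sigma^2/2 psi'' = -(mu psi' - r psi), so psi'' <= 0 exactly where the
   drift mu psi' - r psi is nonnegative, and the drift at 0 is mu(0) >= 0.  If
   psi''(x) > 0 for some x < b, let s be the last point of [0, x] where psi'' <= 0.
   On [s, x] the derivative psi' is nondecreasing, so psi(x) - psi(s) <= psi'(x)(x - s);
   writing mu(y) = m(y) + r y with m nondecreasing and m >= mu(0) >= 0, this gives
   drift(s) <= drift(x) < 0 <= drift(s).  Hence psi'' <= 0 on [0, b), psi' is
   nonincreasing there, and psi lies below its tangent lines, i.e. it is concave. *)

Lemma deriv_on_nonneg_approx f f' : deriv_on_nonneg f f' ->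
  forall x, 0 <= x -> forall eps, 0 < eps -> exists d, 0 < d /\
    forall y, 0 <= y -> y <> x -> Rabs (y - x) < d ->
      Rabs ((f y - f x) / (y - x) - f' x) < eps.
Proof.
  intros Hd x hx eps he.
  destruct (proj1 (filterlim_locally _ _) (Hd x hx) (mkposreal eps he)) as [d Hq].
  exists d; split; [apply cond_pos|].
  intros y hy hyx hyd. exact (Hq y hyd (conj hy hyx)).
Qed.

Lemma continuous_on_nonneg_approx g : continuous_on_nonneg g ->
  forall x, 0 <= x -> forall eps, 0 < eps -> exists d, 0 < d /\
    forall y, 0 <= y -> Rabs (y - x) < d -> Rabs (g y - g x) < eps.
Proof.
  intros Hg x hx eps he.
  destruct (proj1 (filterlim_locally _ _) (Hg x hx) (mkposreal eps he)) as [d Hc].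
  exists d; split; [apply cond_pos|].
  intros y hy hyd. exact (Hc y hyd hy).
Qed.

Lemma deriv_on_nonneg_continuous f f' : deriv_on_nonneg f f' -> continuous_on_nonneg f.
Proof.
  intros Hd x hx. apply filterlim_locally. intros eps.
  destruct (deriv_on_nonneg_approx f f' Hd x hx 1 Rlt_0_1) as [d [hd Hq]].
  set (K := Rabs (f' x) + 1).
  assert (hK : 0 < K) by (pose proof (Rabs_pos (f' x)); unfold K; lra).
  assert (hdK : 0 < Rmin d (eps / K)).
  { apply Rmin_glb_lt; [lra | apply Rdiv_lt_0_compat; [apply cond_pos | exact hK]]. }
  exists (mkposreal _ hdK). intros y hyd hy.
  change (Rabs (y - x) < Rmin d (eps / K)) in hyd.
  change (Rabs (f y - f x) < eps).
  pose proof (Rmin_l d (eps / K)). pose proof (Rmin_r d (eps / K)).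
  destruct (Req_dec y x) as [->|hyx].
  { rewrite Rminus_diag, Rabs_R0. apply cond_pos. }
  specialize (Hq y hy hyx ltac:(lra)).
  set (q := (f y - f x) / (y - x)) in Hq.
  assert (hqK : Rabs q <= K).
  { pose proof (Rabs_triang (q - f' x) (f' x)).
    replace (q - f' x + f' x) with q in * by ring. unfold K. lra. }
  replace (f y - f x) with (q * (y - x)) by (unfold q; field; lra).
  rewrite Rabs_mult.
  apply Rle_lt_trans with (K * Rabs (y - x)).
  - apply Rmult_le_compat_r; [apply Rabs_pos | exact hqK].
  - replace (pos eps) with (K * (eps / K)) by (field; lra).
    apply Rmult_lt_compat_l; lra.
Qed.

Lemma deriv_nonneg_of_increasing f f' : deriv_on_nonneg f f' ->
  (forall x y, 0 <= x -> x < y -> f x < f y) -> forall x, 0 <= x -> 0 <= f' x.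
Proof.
  intros Hd Hinc x hx. apply Rnot_lt_le. intros hneg.
  destruct (deriv_on_nonneg_approx f f' Hd x hx (- f' x) ltac:(lra)) as [d [hd Hq]].
  set (y := x + d / 2).
  assert (hyx : y - x = d / 2) by (unfold y; ring).
  assert (hq : 0 < (f y - f x) / (y - x)).
  { pose proof (Hinc x y hx ltac:(unfold y; lra)).
    apply Rdiv_lt_0_compat; lra. }
  specialize (Hq y ltac:(unfold y; lra) ltac:(intro; lra)).
  rewrite hyx in hq, Hq. rewrite Rabs_right in Hq by lra. specialize (Hq ltac:(lra)).
  apply Rabs_def2 in Hq. lra.
Qed.

(* Extending [f] to the left by the constant [f 0] makes it continuous at 0 in the
   two-sided sense, so that the mean value theorem applies on intervals ending at 0. *)
Definition extend_left (f : R -> R) (y : R) : R := f (Rmax 0 y).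

Lemma continuity_pt_extend_left f x : continuous_on_nonneg f -> 0 <= x ->
  continuity_pt (extend_left f) x.
Proof.
  intros Hc hx. apply continuity_pt_filterlim. unfold extend_left.
  rewrite (Rmax_right 0 x hx).
  apply (filterlim_comp _ _ _ (Rmax 0) f (locally x) (within Defs.nonneg (locally x))).
  - intros P [d Hd]. exists d. intros y hy. apply Hd.
    + change (Rabs (Rmax 0 y - x) < d). change (Rabs (y - x) < d) in hy.
      unfold Rmax; destruct (Rle_dec 0 y); [exact hy|].
      apply Rabs_def2 in hy. apply Rabs_def1; lra.
    + apply Rmax_l.
  - exact (Hc x hx).
Qed.

Lemma derivable_pt_lim_extend_left f f' x : deriv_on_nonneg f f' -> 0 < x ->
  derivable_pt_lim (extend_left f) x (f' x).
Proof.
  intros Hd hx eps he.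
  destruct (deriv_on_nonneg_approx f f' Hd x (Rlt_le _ _ hx) eps he) as [d [hd Hq]].
  assert (hdx : 0 < Rmin d x) by (apply Rmin_glb_lt; lra).
  exists (mkposreal _ hdx). intros h hh0 hh. simpl in hh.
  pose proof (Rmin_l d x). pose proof (Rmin_r d x).
  apply Rabs_def2 in hh as hh'.
  unfold extend_left. rewrite !Rmax_right by lra.
  specialize (Hq (x + h) ltac:(lra) ltac:(lra)).
  replace (x + h - x) with h in Hq by ring. apply Hq. lra.
Qed.

Lemma mvt_nonneg f f' a c : deriv_on_nonneg f f' -> 0 <= a < c ->
  exists xi, a < xi < c /\ f c - f a = f' xi * (c - a).
Proof.
  intros Hd hac.
  set (pr := fun x (hx : a < x < c) =>
    exist _ (f' x) (derivable_pt_lim_extend_left f f' x Hd ltac:(lra))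
    : derivable_pt (extend_left f) x).
  destruct (MVT (extend_left f) id a c pr (fun x _ => derivable_pt_id x) (proj2 hac))
    as [xi [hxi E]].
  - intros x hx. apply continuity_pt_extend_left; [|lra].
    exact (deriv_on_nonneg_continuous f f' Hd).
  - intros x _. exact (derivable_continuous_pt id x (derivable_pt_id x)).
  - exists xi. split; [exact hxi|].
    rewrite derive_pt_id in E. simpl in E. unfold extend_left, id in E.
    rewrite !Rmax_right in E by lra. lra.
Qed.

Lemma increment_le_of_deriv_le f f' a c M : deriv_on_nonneg f f' -> 0 <= a <= c ->
  (forall x, a < x < c -> f' x <= M) -> f c - f a <= M * (c - a).
Proof.
  intros Hd hac HM. destruct (Req_dec a c) as [<-|hne]; [lra|].
  destruct (mvt_nonneg f f' a c Hd ltac:(lra)) as [xi [hxi ->]].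
  apply Rmult_le_compat_r; [lra | apply HM; lra].
Qed.

Lemma increment_ge_of_deriv_ge f f' a c M : deriv_on_nonneg f f' -> 0 <= a <= c ->
  (forall x, a < x < c -> M <= f' x) -> M * (c - a) <= f c - f a.
Proof.
  intros Hd hac HM. destruct (Req_dec a c) as [<-|hne]; [lra|].
  destruct (mvt_nonneg f f' a c Hd ltac:(lra)) as [xi [hxi ->]].
  apply Rmult_le_compat_r; [lra | apply HM; lra].
Qed.

Lemma tangent_above_of_deriv_antitone f f' b : deriv_on_nonneg f f' ->
  (forall u v, 0 <= u <= v -> v < b -> f' v <= f' u) ->
  forall z w, 0 <= z < b -> 0 <= w < b -> f w <= f z + f' z * (w - z).
Proof.
  intros Hd Hanti z w hz hw. destruct (Rle_or_lt z w) as [hzw|hwz].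
  - pose proof (increment_le_of_deriv_le f f' z w (f' z) Hd ltac:(lra)
      (fun x hx => Hanti z x ltac:(lra) ltac:(lra))). lra.
  - pose proof (increment_ge_of_deriv_ge f f' w z (f' z) Hd ltac:(lra)
      (fun x hx => Hanti x z ltac:(lra) ltac:(lra))). lra.
Qed.

Lemma concave_of_tangent_above f f' b :
  (forall z w, 0 <= z < b -> 0 <= w < b -> f w <= f z + f' z * (w - z)) ->
  concave_on_0b f b.
Proof.
  intros Htan x y t hx hy ht.
  set (z := t * x + (1 - t) * y).
  assert (hz : 0 <= z < b).
  { assert (z <= Rmax x y) by (pose proof (Rmax_l x y); pose proof (Rmax_r x y); unfold z; nra).
    assert (Rmax x y < b) by (apply Rmax_lub_lt; lra).
    split; [unfold z; nra | lra]. }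
  pose proof (Htan z x hz hx). pose proof (Htan z y hz hy).
  unfold z in *. nra.
Qed.

Lemma last_nonpos_point g a c : continuous_on_nonneg g -> 0 <= a <= c ->
  g a <= 0 -> 0 < g c ->
  exists s, a <= s < c /\ g s <= 0 /\ forall w, s < w <= c -> 0 < g w.
Proof.
  intros Hg hac hga hgc.
  set (E := fun x => a <= x <= c /\ g x <= 0).
  destruct (completeness E) as [s [Hub Hlub]].
  { exists c. intros y [hy _]. lra. }
  { exists a. split; [lra | exact hga]. }
  assert (has : a <= s) by (apply Hub; split; [lra | exact hga]).
  assert (hsc : s <= c) by (apply Hlub; intros y [hy _]; lra).
  assert (hgs : g s <= 0).
  { apply Rnot_lt_le. intros hpos.
    destruct (continuous_on_nonneg_approx g Hg s ltac:(lra) (g s) hpos) as [d [hd Hc]].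
    assert (s <= s - d); [|lra].
    apply Hlub. intros e [he hge]. apply Rnot_lt_le. intros hde.
    assert (e <= s) by (apply Hub; split; assumption).
    specialize (Hc e ltac:(lra)). rewrite Rabs_left1 in Hc by lra.
    specialize (Hc ltac:(lra)). apply Rabs_def2 in Hc. lra. }
  exists s. split; [split; [exact has|] | split; [exact hgs|]].
  - destruct (Req_dec s c) as [->|]; lra.
  - intros w hw. apply Rnot_le_lt. intros hgw.
    assert (w <= s) by (apply Hub; split; [lra | exact hgw]). lra.
Qed.

Section IncreasingSolution.

Variables (r : R) (mu sigma psi psi1 psi2 : R -> R) (b : R).
Hypotheses (hr : 0 < r) (hsigpos : forall x, 0 <= x -> 0 < sigma x)
  (hD0 : deriv_on_nonneg psi psi1) (hD1 : deriv_on_nonneg psi1 psi2)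
  (hC2 : continuous_on_nonneg psi2)
  (hode : forall x, 0 <= x -> (sigma x) ^ 2 / 2 * psi2 x + mu x * psi1 x = r * psi x)
  (hinc : forall x y, 0 <= x -> x < y -> psi x < psi y)
  (h0 : psi 0 = 0) (h1 : psi1 0 = 1)
  (hmono : forall x y, 0 <= x -> x <= y -> y < b -> mu x - r * x <= mu y - r * y)
  (hmu0 : 0 <= mu 0).

Let drift x := mu x * psi1 x - r * psi x.

Lemma psi2_nonpos_iff x : 0 <= x -> (psi2 x <= 0 <-> 0 <= drift x).
Proof.
  intros hx. pose proof (hode x hx). pose proof (hsigpos x hx).
  assert (0 < sigma x ^ 2 / 2) by nra.
  unfold drift. split; intros; nra.
Qed.

Lemma drift_le s x : 0 <= s <= x -> x < b ->
  psi1 s <= psi1 x -> psi x - psi s <= psi1 x * (x - s) -> drift s <= drift x.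
Proof.
  intros hs hx hpsi1 hpsi.
  pose proof (hmono 0 s (Rle_refl 0) ltac:(lra) ltac:(lra)) as hm0.
  pose proof (hmono s x ltac:(lra) ltac:(lra) hx) as hms.
  pose proof (deriv_nonneg_of_increasing psi psi1 hD0 hinc x ltac:(lra)).
  assert (0 <= (mu x - r * x - (mu s - r * s)) * psi1 x) by (apply Rmult_le_pos; lra).
  assert (0 <= (mu s - r * s) * (psi1 x - psi1 s)) by (apply Rmult_le_pos; lra).
  assert (0 <= r * s * (psi1 x - psi1 s)) by (apply Rmult_le_pos; [apply Rmult_le_pos|]; lra).
  assert (0 <= r * (psi1 x * (x - s) - (psi x - psi s))) by (apply Rmult_le_pos; lra).
  unfold drift. lra.
Qed.

Lemma psi2_nonpos x : 0 <= x < b -> psi2 x <= 0.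
Proof.
  intros hx. apply Rnot_lt_le. intros hpos.
  assert (h20 : psi2 0 <= 0).
  { apply psi2_nonpos_iff; [lra|]. unfold drift. rewrite h0, h1. lra. }
  destruct (last_nonpos_point psi2 0 x hC2 ltac:(lra) h20 hpos)
    as [s [hs [hgs hpos_after]]].
  assert (hpsi1 : forall w, s <= w <= x -> psi1 w <= psi1 x).
  { intros w hw.
    pose proof (increment_ge_of_deriv_ge psi1 psi2 w x 0 hD1 ltac:(lra)
      (fun u hu => Rlt_le _ _ (hpos_after u ltac:(lra)))). lra. }
  pose proof (increment_le_of_deriv_le psi psi1 s x (psi1 x) hD0 ltac:(lra)
    (fun u hu => hpsi1 u ltac:(lra))) as hpsi.
  pose proof (drift_le s x ltac:(lra) ltac:(lra) (hpsi1 s ltac:(lra)) hpsi).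
  pose proof (proj1 (psi2_nonpos_iff s ltac:(lra)) hgs).
  assert (~ 0 <= drift x) by (rewrite <- psi2_nonpos_iff; lra).
  lra.
Qed.

Lemma psi1_antitone u v : 0 <= u <= v -> v < b -> psi1 v <= psi1 u.
Proof.
  intros huv hv.
  pose proof (increment_le_of_deriv_le psi1 psi2 u v 0 hD1 huv
    (fun x hx => psi2_nonpos x ltac:(lra))). lra.
Qed.

End IncreasingSolution.

Theorem lemmaA3 (r : R) (mu sigma psi psi1 psi2 : R -> R) (b : R)
  (hr : 0 < r)
  (hmu : lipschitz_nonneg mu)
  (hsigL : lipschitz_nonneg sigma)
  (hsigpos : forall x, 0 <= x -> 0 < sigma x)
  (hC2 : C2_nonneg psi psi1 psi2)
  (hode : forall x, 0 <= x ->
     (sigma x) ^ 2 / 2 * psi2 x + mu x * psi1 x = r * psi x)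
  (hnn : forall x, 0 <= x -> 0 <= psi x)
  (hinc : forall x y, 0 <= x -> x < y -> psi x < psi y)
  (h0 : psi 0 = 0) (h1 : psi1 0 = 1)
  (hb : 0 <= b)
  (hmono : forall x y, 0 <= x -> x <= y -> y < b -> mu x - r * x <= mu y - r * y)
  (hmu0 : 0 <= mu 0) :
  concave_on_0b psi b.
Proof.
  destruct hC2 as [hD0 [hD1 hC]].
  apply (concave_of_tangent_above psi psi1).
  apply (tangent_above_of_deriv_antitone psi psi1 b hD0).
  exact (psi1_antitone r mu sigma psi psi1 psi2 b
           hr hsigpos hD0 hD1 hC hode hinc h0 h1 hmono hmu0).
Qed.
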